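(* Let $(\mathsf C,\mathrm W)$ be a 2-weighted 2-category. Then the interleaving distance $d_{\mathsf C,\mathrm W}$ is an extended pseudometric on the class of objects $\mathsf C_0$.
   Context: A Lawvere 2-weight on a (strict) 2-category $\mathsf C$ is a pair $\mathrm W=(\mathrm W_1,\mathrm W_2)$ of functions $\mathrm W_1$ from 1-morphisms to $\mathbb R_{\ge0}$ and $\mathrm W_2$ from 2-morphisms to $\mathbb R_{\ge0}$ such that $\mathrm W_1(1_A)=0$ for all objects $A$, $\mathrm W_2(1_f)=0$ for all 1-morphisms $f$, $\mathrm W_1(gf)\le\mathrm W_1(g)+\mathrm W_1(f)$ for composable 1-morphisms, and for 2-morphisms $\mathrm W_2(\beta\alpha)\le\mathrm W_2(\beta)+\mathrm W_2(\alpha)$ (vertical composition) and $\mathrm W_2(\gamma\bullet\alpha)\le\mathrm W_2(\gamma)+\mathrm W_2(\alpha)$ (horizontal composition). A 2-weighted 2-category is such a pair $(\mathsf C,\mathrm W)$. For $A,B\in\mathsf C_0$ and $t\ge0$, $A$ and $B$ are $t$-interleaved if there exist 1-morphisms $g:A\to B$, $h:B\to A$ and 2-morphisms $\alpha:1_A\Rightarrow hg$, $\beta:1_B\Rightarrow gh$ with $\max\{\mathrm W_1(g),\mathrm W_1(h),\mathrm W_2(\alpha),\mathrm W_2(\beta)\}\le t$. Then $d_{\mathsf C,\mathrm W}(A,B)=\inf\{t\ge0: A,B\ t\text{-interleaved}\}$, with $\inf\emptyset=\infty$. An extended pseudometric is $[0,\infty]$-valued, zero on the diagonal, symmetric and satisfies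 the triangle inequality. *)

From Stdlib Require Import Reals.
From Coquelicot Require Import Coquelicot.
Open Scope R_scope.

Definition cast2 {X Y : Type} (P : X -> Y -> Type) {a a' : X} {b b' : Y}
  (e1 : a = a') (e2 : b = b') (x : P a b) : P a' b' :=
  match e1 in _ = a1 return P a1 b' with
  | eq_refl => match e2 in _ = b1 return P a b1 with eq_refl => x end
  end.

Record TwoCat := {
  obj : Type;
  hom : obj -> obj -> Type;
  id1 : forall A, hom A A;
  comp1 : forall A B C, hom B C -> hom A B -> hom A C;
  cell : forall A B, hom A B -> hom A B -> Type;
  id2 : forall A B (f : hom A B), cell A B f f;
  vcomp : forall A B (f g h : hom A B), cell A B g h -> cell A B f g -> cell A B f h;
  hcomp : forall A B C (g g' : hom B C) (f f' : hom A B),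
      cell B C g g' -> cell A B f f' -> cell A C (comp1 A B C g f) (comp1 A B C g' f');
  comp1_assoc : forall A B C D (h : hom C D) (g : hom B C) (f : hom A B),
      comp1 A C D h (comp1 A B C g f) = comp1 A B D (comp1 B C D h g) f;
  comp1_idl : forall A B (f : hom A B), comp1 A B B (id1 B) f = f;
  comp1_idr : forall A B (f : hom A B), comp1 A A B f (id1 A) = f;
  vcomp_assoc : forall A B (f g h k : hom A B) (g1 : cell A B h k) (b1 : cell A B g h)
      (a1 : cell A B f g),
      vcomp A B f h k g1 (vcomp A B f g h b1 a1) = vcomp A B f g k (vcomp A B g h k g1 b1) a1;
  vcomp_idl : forall A B (f g : hom A B) (a1 : cell A B f g), vcomp A B f g g (id2 A B g) a1 = a1;
  vcomp_idr : forall A B (f g : hom A B) (a1 : cell A B f g), vcomp A B f f g a1 (id2 A B f) = a1;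
  (* horizontal composition: associativity and units (strict, up to transport) *)
  hcomp_assoc : forall A B C D (h h' : hom C D) (g g' : hom B C) (f f' : hom A B)
      (c1 : cell C D h h') (b1 : cell B C g g') (a1 : cell A B f f'),
      cast2 (cell A D) (comp1_assoc A B C D h g f) (comp1_assoc A B C D h' g' f')
        (hcomp A C D h h' (comp1 A B C g f) (comp1 A B C g' f') c1 (hcomp A B C g g' f f' b1 a1))
      = hcomp A B D (comp1 B C D h g) (comp1 B C D h' g') f f' (hcomp B C D h h' g g' c1 b1) a1;
  hcomp_idl : forall A B (f f' : hom A B) (a1 : cell A B f f'),
      cast2 (cell A B) (comp1_idl A B f) (comp1_idl A B f')
        (hcomp A B B (id1 B) (id1 B) f f' (id2 B B (id1 B)) a1) = a1;
  hcomp_idr : forall A B (f f' : hom A B) (a1 : cell A B f f'),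
      cast2 (cell A B) (comp1_idr A B f) (comp1_idr A B f')
        (hcomp A A B f f' (id1 A) (id1 A) a1 (id2 A A (id1 A))) = a1;
  hcomp_id2 : forall A B C (g : hom B C) (f : hom A B),
      hcomp A B C g g f f (id2 B C g) (id2 A B f) = id2 A C (comp1 A B C g f);
  interchange : forall A B C (g g' g'' : hom B C) (f f' f'' : hom A B)
      (c1 : cell B C g g') (d1 : cell B C g' g'') (a1 : cell A B f f') (b1 : cell A B f' f''),
      hcomp A B C g g'' f f'' (vcomp B C g g' g'' d1 c1) (vcomp A B f f' f'' b1 a1)
      = vcomp A C (comp1 A B C g f) (comp1 A B C g' f') (comp1 A B C g'' f'')
          (hcomp A B C g' g'' f' f'' d1 b1) (hcomp A B C g g' f f' c1 a1)
}.

Arguments id1 {t} A.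
Arguments comp1 {t A B C} _ _.
Arguments cell {t A B} _ _.
Arguments id2 {t A B} f.
Arguments vcomp {t A B f g h} _ _.
Arguments hcomp {t A B C g g' f f'} _ _.

Record Lawvere2Weight (C : TwoCat) := {
  W1 : forall A B : obj C, hom C A B -> R;
  W2 : forall (A B : obj C) (f g : hom C A B), cell f g -> R;
  W1_nonneg : forall A B (f : hom C A B), 0 <= W1 A B f;
  W2_nonneg : forall A B (f g : hom C A B) (a : cell f g), 0 <= W2 A B f g a;
  W1_id : forall A, W1 A A (id1 A) = 0;
  W2_id : forall A B (f : hom C A B), W2 A B f f (id2 f) = 0;
  W1_comp : forall A B D (g : hom C B D) (f : hom C A B),
      W1 A D (comp1 g f) <= W1 B D g + W1 A B f;
  W2_vcomp : forall A B (f g h : hom C A B) (b : cell g h) (a : cell f g),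
      W2 A B f h (vcomp b a) <= W2 A B g h b + W2 A B f g a;
  W2_hcomp : forall A B D (g g' : hom C B D) (f f' : hom C A B)
      (c : cell g g') (a : cell f f'),
      W2 A D (comp1 g f) (comp1 g' f') (hcomp c a) <= W2 B D g g' c + W2 A B f f' a
}.

Arguments W1 {C} l {A B} f.
Arguments W2 {C} l {A B f g} a.

Definition interleaved (C : TwoCat) (W : Lawvere2Weight C) (A B : obj C) (t : R) : Prop :=
  exists (g : hom C A B) (h : hom C B A)
         (a : cell (id1 A) (comp1 h g)) (b : cell (id1 B) (comp1 g h)),
    W1 W g <= t /\ W1 W h <= t /\ W2 W a <= t /\ W2 W b <= t.

(* Interleaving distance: inf {t >= 0 | A, B t-interleaved}, inf of the empty set = +oo. *)
Definition interleaving_dist (C : TwoCat) (W : Lawvere2Weight C) (A B : obj C) : Rbar :=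
  Glb_Rbar (fun t => 0 <= t /\ interleaved C W A B t).

Definition is_ext_pseudometric {X : Type} (d : X -> X -> Rbar) : Prop :=
  (forall x y, Rbar_le (Finite 0) (d x y)) /\
  (forall x, d x x = Finite 0) /\
  (forall x y, d x y = d y x) /\
  (forall x y z, Rbar_le (d x z) (Rbar_plus (d x y) (d y z))).

(* Interleavings compose: from g1 : A -> B, h1 : B -> A and g2 : B -> D, h2 : D -> B one gets
   g2 g1 and h1 h2, and the unit 1_A => h1 h2 g2 g1 is the unit a1 : 1_A => h1 g1 followed by
   the unit a2 : 1_B => h2 g2 whiskered by h1 and g1.  Whiskering by identity 2-cells costs
   nothing, so the weights add up and s- and t-interleavings give an (s + t)-interleaving.
   Together with the identity 0-interleaving and the symmetry of the definition, passing to
   infima yields the pseudometric axioms. *)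

From Stdlib Require Import Reals Lra Classical.
From Coquelicot Require Import Coquelicot.

Section Interleavings.

Variables (C : TwoCat) (W : Lawvere2Weight C).

Lemma W2_cast2 (A B : obj C) (f f' g g' : hom C A B) (e1 : f = f') (e2 : g = g')
    (a : cell f g) :
  W2 W (cast2 (@cell C A B) e1 e2 a) = W2 W a.
Proof. now destruct e1, e2. Qed.

Lemma W2_whisker (A B D E : obj C) (h : hom C D E) (g : hom C A B)
    (f f' : hom C B D) (a : cell f f') :
  W2 W (hcomp (id2 h) (hcomp a (id2 g))) <= W2 W a.
Proof.
  pose proof (W2_hcomp C W _ _ _ _ _ _ _ (id2 h) (hcomp a (id2 g))) as Hout.
  pose proof (W2_hcomp C W _ _ _ _ _ _ _ a (id2 g)) as Hin.
  rewrite !W2_id in *. lra.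
Qed.

Lemma unit_cell_comp (A B D : obj C) (g1 : hom C A B) (h1 : hom C B A)
    (g2 : hom C B D) (h2 : hom C D B)
    (a1 : cell (id1 A) (comp1 h1 g1)) (a2 : cell (id1 B) (comp1 h2 g2)) :
  exists a : cell (id1 A) (comp1 (comp1 h1 h2) (comp1 g2 g1)),
    W2 W a <= W2 W a1 + W2 W a2.
Proof.
  assert (e_src : comp1 h1 (comp1 (id1 B) g1) = comp1 h1 g1)
    by now rewrite comp1_idl.
  assert (e_tgt : comp1 h1 (comp1 (comp1 h2 g2) g1) = comp1 (comp1 h1 h2) (comp1 g2 g1))
    by now rewrite <- !comp1_assoc.
  exists (vcomp (cast2 (@cell C A A) e_src e_tgt (hcomp (id2 h1) (hcomp a2 (id2 g1)))) a1).
  eapply Rle_trans; [apply W2_vcomp|].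
  rewrite W2_cast2.
  pose proof (W2_whisker _ _ _ _ h1 g1 _ _ a2). lra.
Qed.

Lemma interleaved_refl (A : obj C) : interleaved C W A A 0.
Proof.
  exists (id1 A), (id1 A).
  set (e := eq_sym (comp1_idl C A A (id1 A))).
  exists (cast2 (@cell C A A) eq_refl e (id2 (id1 A))),
         (cast2 (@cell C A A) eq_refl e (id2 (id1 A))).
  rewrite W1_id, W2_cast2, W2_id. repeat split; lra.
Qed.

Lemma interleaved_sym (A B : obj C) (t : R) :
  interleaved C W A B t -> interleaved C W B A t.
Proof.
  intros (g & h & a & b & Hg & Hh & Ha & Hb).
  now exists h, g, b, a.
Qed.

Lemma interleaved_trans (A B D : obj C) (s t : R) :
  interleaved C W A B s -> interleaved C W B D t -> interleaved C W A D (s + t).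
Proof.
  intros (g1 & h1 & a1 & b1 & Hg1 & Hh1 & Ha1 & Hb1)
         (g2 & h2 & a2 & b2 & Hg2 & Hh2 & Ha2 & Hb2).
  destruct (unit_cell_comp _ _ _ g1 h1 g2 h2 a1 a2) as [a Ha].
  destruct (unit_cell_comp _ _ _ h2 g2 h1 g1 b2 b1) as [b Hb].
  exists (comp1 g2 g1), (comp1 h1 h2), a, b.
  pose proof (W1_comp C W _ _ _ g2 g1).
  pose proof (W1_comp C W _ _ _ h1 h2).
  repeat split; lra.
Qed.

End Interleavings.

Lemma Glb_Rbar_le (E : R -> Prop) (x : R) : E x -> Rbar_le (Glb_Rbar E) x.
Proof. intros Ex. now apply (Glb_Rbar_correct E). Qed.

Lemma Glb_Rbar_ge (E : R -> Prop) (c : R) :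
  (forall x, E x -> c <= x) -> Rbar_le c (Glb_Rbar E).
Proof. intros Hc. now apply (Glb_Rbar_correct E). Qed.

Lemma is_glb_Rbar_approx (E : R -> Prop) (l eps : R) :
  is_glb_Rbar E l -> 0 < eps -> exists s, E s /\ s < l + eps.
Proof.
  intros [_ Hgreatest] Heps.
  apply NNPP. intros Hnone.
  assert (Hle : Rbar_le (l + eps) l).
  { apply Hgreatest. intros x Ex. apply Rnot_lt_le. intros Hlt. apply Hnone. eauto. }
  simpl in Hle. lra.
Qed.

Lemma Rbar_le_eps (x : Rbar) (y : R) :
  (forall eps, 0 < eps -> Rbar_le x (y + eps)) -> Rbar_le x y.
Proof.
  intros Hx. destruct x as [x| |]; simpl.
  - apply le_epsilon. intros eps Heps. exact (Hx eps Heps).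
  - exact (Hx 1 Rlt_0_1).
  - exact I.
Qed.

(* The nonnegativity assumptions exclude the case [-oo + +oo], which [Rbar_plus] sends to [0]. *)
Lemma Glb_Rbar_plus_le (E1 E2 E3 : R -> Prop) :
  (forall x, E1 x -> 0 <= x) -> (forall x, E2 x -> 0 <= x) ->
  (forall s t, E1 s -> E2 t -> E3 (s + t)) ->
  Rbar_le (Glb_Rbar E3) (Rbar_plus (Glb_Rbar E1) (Glb_Rbar E2)).
Proof.
  intros H1 H2 H3.
  pose proof (Glb_Rbar_ge _ _ H1) as N1.
  pose proof (Glb_Rbar_ge _ _ H2) as N2.
  pose proof (Glb_Rbar_correct E1) as G1.
  pose proof (Glb_Rbar_correct E2) as G2.
  destruct (Glb_Rbar E1) as [d1| |]; [| | contradiction].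
  2: destruct (Glb_Rbar E2); [| | contradiction]; now destruct (Glb_Rbar E3).
  destruct (Glb_Rbar E2) as [d2| |]; [| now destruct (Glb_Rbar E3) | contradiction].
  apply Rbar_le_eps. intros eps Heps.
  destruct (is_glb_Rbar_approx _ _ (eps / 2) G1) as (s & Hs & Hs_lt); [lra|].
  destruct (is_glb_Rbar_approx _ _ (eps / 2) G2) as (t & Ht & Ht_lt); [lra|].
  apply Rbar_le_trans with (s + t).
  - apply Glb_Rbar_le, H3; assumption.
  - simpl. lra.
Qed.

Theorem theorem5p3 (C : TwoCat) (W : Lawvere2Weight C) :
  is_ext_pseudometric (interleaving_dist C W).
Proof.
  unfold is_ext_pseudometric, interleaving_dist.
  split; [|split; [|split]].
  - intros A B. now apply Glb_Rbar_ge.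
  - intros A. apply Rbar_le_antisym.
    + apply Glb_Rbar_le. split; [lra | apply interleaved_refl].
    + now apply Glb_Rbar_ge.
  - intros A B. apply Glb_Rbar_eqset.
    intros t; split; intros [Ht Hi]; split; auto; now apply interleaved_sym.
  - intros A B D. apply Glb_Rbar_plus_le; try tauto.
    intros s t [Hs Hst] [Ht Htt]. split; [lra|].
    now apply interleaved_trans with B.
Qed.
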